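(* If $S$ is a numerical semigroup whose set of Betti elements $\mathrm{Betti}(S)$ is totally ordered by $\le_S$ (i.e. $S$ is Betti-sorted), then $S$ is a complete intersection.
   Context: A numerical semigroup is a submonoid of $(\mathbb N,+)$ with finite complement, minimally generated by $\{n_1,\dots,n_e\}$. Write $a\le_S b$ if $b-a\in S$. Let $\varphi:\mathbb N^e\to S$, $\varphi(a)=\sum_ia_in_i$, $\mathrm Z(s)=\varphi^{-1}(s)$. $\nabla_s$ is the graph on $\mathrm Z(s)$ with distinct $x,y$ adjacent iff $x\cdot y\neq0$; $\mathrm{nc}(\nabla_s)$ is its number of connected components; $s$ is a Betti element if $\nabla_s$ is disconnected. A minimal presentation of $S$ is a minimal (by inclusion) system of generators of the congruence $\ker\varphi=\{(a,b):\varphi(a)=\varphi(b)\}$; all minimal presentations have cardinality $\sum_{b\in\mathrm{Betti}(S)}(\mathrm{nc}(\nabla_b)-1)\ge e-1$. $S$ is a complete intersection if this cardinality equals $e-1$. *)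

From mathcomp Require Import all_boot.
Set Implicit Arguments. Unset Strict Implicit. Unset Printing Implicit Defensive.

Definition numerical_semigroup (S : nat -> Prop) : Prop :=
  [/\ S 0, (forall a b, S a -> S b -> S (a + b)) & exists N, forall m, N <= m -> S m].

Definition minimal_generator (S : nat -> Prop) (x : nat) : Prop :=
  [/\ S x, 0 < x & ~ (exists a b, [/\ S a, S b, 0 < a, 0 < b & x = a + b])].

Definition minimal_generating_system (S : nat -> Prop) (e : nat) (n : 'I_e -> nat) : Prop :=
  injective n /\ (forall x, minimal_generator S x <-> exists i, n i = x).

Definition leS (S : nat -> Prop) (a b : nat) : Prop := a <= b /\ S (b - a).

Definition phi (e : nat) (n : 'I_e -> nat) (a : {ffun 'I_e -> nat}) : nat :=
  \sum_(i < e) a i * n i.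

(** Z(s): factorizations of s. Since every n_i >= 1, all coordinates are <= s,
    so we may take them in the finite type {ffun 'I_e -> 'I_s.+1}. *)
Definition Zf (e : nat) (n : 'I_e -> nat) (s : nat) : {set {ffun 'I_e -> 'I_s.+1}} :=
  [set x : {ffun 'I_e -> 'I_s.+1} | \sum_(i < e) (x i : nat) * n i == s].
Arguments Zf {e} n s.

Definition nabla_edge (e : nat) (n : 'I_e -> nat) (s : nat) :
    rel {ffun 'I_e -> 'I_s.+1} :=
  fun x y => [&& x \in Zf n s, y \in Zf n s, x != y &
                 [exists i, (0 < (x i : nat)) && (0 < (y i : nat))]].
Arguments nabla_edge {e} n s.

Definition nc (e : nat) (n : 'I_e -> nat) (s : nat) : nat :=
  n_comp (nabla_edge n s) (mem (Zf n s)).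

Definition betti (S : nat -> Prop) (e : nat) (n : 'I_e -> nat) (s : nat) : Prop :=
  S s /\ 1 < nc n s.

Definition betti_sorted (S : nat -> Prop) (e : nat) (n : 'I_e -> nat) : Prop :=
  forall b b', betti S n b -> betti S n b' -> leS S b b' \/ leS S b' b.

Definition vadd (e : nat) (a c : {ffun 'I_e -> nat}) : {ffun 'I_e -> nat} :=
  [ffun i => a i + c i].

Inductive cong_gen (e : nat) (rho : {ffun 'I_e -> nat} * {ffun 'I_e -> nat} -> Prop) :
    {ffun 'I_e -> nat} -> {ffun 'I_e -> nat} -> Prop :=
  | cg_base a b : rho (a, b) -> cong_gen rho a b
  | cg_refl a : cong_gen rho a a
  | cg_sym a b : cong_gen rho a b -> cong_gen rho b a
  | cg_trans a b c : cong_gen rho a b -> cong_gen rho b c -> cong_gen rho a c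
  | cg_add a b c : cong_gen rho a b -> cong_gen rho (vadd a c) (vadd b c).

Definition presentation (e : nat) (n : 'I_e -> nat)
    (rho : {ffun 'I_e -> nat} * {ffun 'I_e -> nat} -> Prop) : Prop :=
  forall a b, cong_gen rho a b <-> phi n a = phi n b.

Definition minimal_presentation (e : nat) (n : 'I_e -> nat)
    (rho : {ffun 'I_e -> nat} * {ffun 'I_e -> nat} -> Prop) : Prop :=
  presentation n rho /\
  forall sigma, (forall p, sigma p -> rho p) -> presentation n sigma ->
    forall p, rho p -> sigma p.

(** S is a complete intersection: a (hence every) minimal presentation has
    cardinality e - 1. *)
Definition complete_intersection (e : nat) (n : 'I_e -> nat) : Prop :=
  exists rho : seq ({ffun 'I_e -> nat} * {ffun 'I_e -> nat}),
    [/\ uniq rho, minimal_presentation n (fun p => p \in rho) & size rho = e - 1].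

From mathcomp Require Import all_boot all_algebra.
From Stdlib Require Import Classical ClassicalDescription.
Set Implicit Arguments. Unset Strict Implicit. Unset Printing Implicit Defensive.
Import GRing.Theory Num.Theory.

(** Every system rho of generators of
     ker phi has at least e - 1 elements: the e - 1 relations
     n_0 u_i - n_i u_0 (i > 0) are linearly independent over Q and lie in
     the row space of the matrix of differences of the pairs of rho.

  For every Betti element b, join one
     fixed component of nabla_b to each of the others by a pair of
     factorizations.  By induction on phi these pairs generate ker phi, and
     every one of them is needed, since a congruence that avoids the pair
     joining two components of nabla_b never relates them.  The
     presentation has sum_b (nc(nabla_b) - 1) elements.

  Call a
     component of nabla_b "main" when it contains a factorization y + c
     with y a factorization of a smaller Betti element; by sortedness there
     is at most one such component, and none when b is the least Betti
     element.  Choosing in every non-main component an index of its support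
     gives injective maps into 'I_e with pairwise disjoint images for
     distinct Betti elements, so sum_b (nc(nabla_b) - 1) <= e - 1; the same
     count shows that there are at most e Betti elements.

  Comparing the three parts, the presentation of part 2 has e - 1 elements. *)

(** ** Factorizations and the graphs nabla_s *)

Section Factorizations.
Variables (e : nat) (n : 'I_e -> nat).
Local Notation vec := {ffun 'I_e -> nat}.
Implicit Types (a c u v : vec) (i : 'I_e) (s : nat).

Definition kunit (k : nat) i : vec := [ffun j => if j == i then k else 0].

Definition vzero : vec := [ffun => 0].

Lemma phi_vadd a c : phi n (vadd a c) = phi n a + phi n c.
Proof. by rewrite /phi -big_split /=; apply: eq_bigr => i _; rewrite ffunE mulnDl. Qed.

Lemma phi_kunit k i : phi n (kunit k i) = k * n i.
Proof.
rewrite /phi (bigD1 i) //= big1 ?addn0; first by rewrite ffunE eqxx.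
by move=> j /negbTE ji; rewrite ffunE ji mul0n.
Qed.

Lemma phi_vzero : phi n vzero = 0.
Proof. by rewrite /phi big1 // => i _; rewrite ffunE. Qed.

Lemma vadd0 a : vadd a vzero = a.
Proof. by apply/ffunP => i; rewrite !ffunE addn0. Qed.

Lemma phi_support a : 0 < phi n a -> exists i, 0 < a i.
Proof.
move=> pos; case: (pickP (fun i => 0 < a i)) => [i ai|a0]; first by exists i.
move: pos; rewrite /phi big1 // => i _.
by have := a0 i; rewrite lt0n => /negbFE/eqP ->.
Qed.

Lemma cong_gen_phi (sigma : vec * vec -> Prop) :
  (forall u v, sigma (u, v) -> phi n u = phi n v) ->
  forall u v, cong_gen sigma u v -> phi n u = phi n v.
Proof.
move=> hsig u v; elim=> {u v} [u v /hsig //|//|u v _ -> //|u v w _ -> //|u v c _ IH].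
by rewrite !phi_vadd IH.
Qed.

Definition embed s a : {ffun 'I_e -> 'I_s.+1} := [ffun i => inord (a i)].
Definition vec_of s (x : {ffun 'I_e -> 'I_s.+1}) : vec := [ffun i => nat_of_ord (x i)].

Lemma vec_ofE s (x : {ffun 'I_e -> 'I_s.+1}) i : vec_of x i = x i.
Proof. by rewrite ffunE. Qed.

Lemma coord_vadd s (x : {ffun 'I_e -> 'I_s.+1}) y c i :
  vec_of x = vadd y c -> (x i : nat) = y i + c i.
Proof. by move=> h; rewrite -vec_ofE h ffunE. Qed.

Lemma embedK s (x : {ffun 'I_e -> 'I_s.+1}) : embed s (vec_of x) = x.
Proof. by apply/ffunP => i; rewrite !ffunE inord_val. Qed.

Lemma vec_of_inj s : injective (@vec_of s).
Proof. by move=> x y /(congr1 (embed s)); rewrite !embedK. Qed.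

Lemma mem_Zf s (x : {ffun 'I_e -> 'I_s.+1}) : (x \in Zf n s) = (phi n (vec_of x) == s).
Proof. by rewrite inE /phi; congr (_ == _); apply: eq_bigr => i _; rewrite ffunE. Qed.

Lemma phi_vec_of s (x : {ffun 'I_e -> 'I_s.+1}) : x \in Zf n s -> phi n (vec_of x) = s.
Proof. by rewrite mem_Zf => /eqP. Qed.

(** The generators are positive from now on, so coordinates are bounded by phi. *)
Hypothesis npos : forall i, 0 < n i.

Lemma coord_le_phi a i : a i <= phi n a.
Proof.
rewrite /phi (bigD1 i) //=; apply: leq_trans (leq_addr _ _).
by rewrite -{1}[a i]muln1 leq_mul2l npos orbT.
Qed.

Lemma phi_eq0 a : phi n a = 0 -> a = vzero.
Proof.
by move=> a0; apply/ffunP => i; rewrite ffunE; apply/eqP; rewrite -leqn0 -a0 coord_le_phi.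
Qed.

Lemma vec_ofK s a : phi n a = s -> vec_of (embed s a) = a.
Proof. by move=> <-; apply/ffunP => i; rewrite !ffunE inordK // ltnS coord_le_phi. Qed.

Lemma embed_Zf s a : phi n a = s -> embed s a \in Zf n s.
Proof. by move=> ha; rewrite mem_Zf vec_ofK // ha. Qed.

Local Notation E s := (nabla_edge n s).

Lemma nabla_connect_sym s : connect_sym (E s).
Proof.
apply/sym_connect_sym => x y; rewrite /nabla_edge andbCA eq_sym.
congr [&& _, _, _ & _].
by apply/existsP/existsP => -[i /andP[h1 h2]]; exists i; rewrite h1 h2.
Qed.

Lemma share_connect s x y i : x \in Zf n s -> y \in Zf n s ->
  0 < x i -> 0 < y i -> connect (E s) x y.
Proof.
move=> zx zy xi yi; have [->|nxy] := eqVneq x y; first exact: connect0.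
by apply: connect1; rewrite /nabla_edge zx zy nxy; apply/existsP; exists i; rewrite xi yi.
Qed.

Lemma connect_Zf s x y : connect (E s) x y -> x \in Zf n s -> y \in Zf n s.
Proof.
move=> /connectP[p]; elim: p x => [|z p IH] x /=; first by move=> _ ->.
by move=> /andP[/and4P[_ zz _ _] hp] hy _; apply: IH hp hy zz.
Qed.

Definition comps s : {set {ffun 'I_e -> 'I_s.+1}} :=
  [set r | (r \in roots (E s)) && (r \in Zf n s)].

Lemma card_comps s : #|comps s| = nc n s.
Proof. by rewrite /nc /n_comp_mem; apply: eq_card => r; rewrite !inE. Qed.

Lemma mem_comps s r : r \in comps s -> fingraph.root (E s) r = r /\ r \in Zf n s.
Proof. by rewrite inE => /andP[/eqP ? ?]. Qed.

Lemma root_comps s x : x \in Zf n s -> fingraph.root (E s) x \in comps s.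
Proof.
move=> zx; rewrite inE; apply/andP; split; first exact: (roots_root (@nabla_connect_sym s)).
exact: connect_Zf (connect_root _ x) zx.
Qed.

Lemma comps_eq s r1 r2 : r1 \in comps s -> r2 \in comps s ->
  connect (E s) r1 r2 -> r1 = r2.
Proof.
move=> /mem_comps[h1 _] /mem_comps[h2 _] /(fingraph.rootP (@nabla_connect_sym s)).
by rewrite h1 h2.
Qed.

(** 0 has only the zero factorization. *)
Lemma nc_zero : nc n 0 <= 1.
Proof.
rewrite -card_comps; apply: (@leq_trans #|[set embed 0 vzero]|); last by rewrite cards1.
apply/subset_leq_card/subsetP => x /mem_comps[_ /phi_vec_of/phi_eq0 x0].
by rewrite inE; apply/eqP/(@vec_of_inj 0); rewrite x0 vec_ofK // phi_vzero.
Qed.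

End Factorizations.

(** ** Lower bound: a system of generators of ker phi has at least e - 1 elements *)

Section LowerBound.
Variables (e' : nat) (n : 'I_e'.+1 -> nat).
Variable rho : seq ({ffun 'I_e'.+1 -> nat} * {ffun 'I_e'.+1 -> nat}).
Local Notation e := e'.+1.
Local Notation vec := {ffun 'I_e -> nat}.
Hypothesis n0_pos : 0 < n ord0.
Hypothesis rho_gen : forall a b, phi n a = phi n b -> cong_gen (fun p => p \in rho) a b.

Local Open Scope ring_scope.

Definition rowv (a : vec) : 'rV[rat]_e := \row_j (a j)%:R.

Definition diffs : 'M[rat]_(size rho, e) :=
  \matrix_(k, j) let p := nth (vzero e, vzero e) rho k in (p.1 j)%:R - (p.2 j)%:R.

Lemma rowv_vadd a c : rowv (vadd a c) = rowv a + rowv c.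
Proof. by apply/rowP => j; rewrite !mxE ffunE natrD. Qed.

Lemma cong_row_space a b :
  cong_gen (fun p => p \in rho) a b -> (rowv a - rowv b <= diffs)%MS.
Proof.
elim=> {a b} [a b h|a|a b _ IH|a b c _ IH1 _ IH2|a b c _ IH].
- have hk : (index (a, b) rho < size rho)%N by rewrite index_mem.
  have -> : rowv a - rowv b = row (Ordinal hk) diffs.
    by apply/rowP => j; rewrite !mxE /= nth_index.
  exact: row_sub.
- by rewrite subrr sub0mx.
- by rewrite -opprB eqmx_opp.
- by rewrite -[rowv a](subrK (rowv b)) -addrA addmx_sub.
- by rewrite !rowv_vadd opprD addrACA subrr addr0.
Qed.

(** Row i of [binomials] is the relation n_0 u_(i+1) - n_(i+1) u_0. *)
Definition binomials : 'M[rat]_(e', e) :=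
  \matrix_(i, j) ((j == lift ord0 i)%:R * (n ord0)%:R - (j == ord0)%:R * (n (lift ord0 i))%:R).

Lemma binomials_sub : (binomials <= diffs)%MS.
Proof.
apply/row_subP => i.
have -> : row i binomials =
    rowv (kunit (n ord0) (lift ord0 i)) - rowv (kunit (n (lift ord0 i)) ord0).
  apply/rowP => j; rewrite !mxE !ffunE.
  by case: (j == lift ord0 i); case: (j == ord0); rewrite ?mul1r ?mul0r.
by apply/cong_row_space/rho_gen; rewrite !phi_kunit mulnC.
Qed.

Lemma binomials_free : row_free binomials.
Proof.
apply/row_freeP; exists (\matrix_(j, i) ((j == lift ord0 i)%:R / (n ord0)%:R)).
apply/matrixP => i i'; rewrite !mxE (bigD1 (lift ord0 i')) //= big1 => [|j hj]; last first.
  by rewrite !mxE (negbTE hj) mul0r mulr0.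
have hl : (lift ord0 i' == ord0 :> 'I_e) = false by rewrite eq_sym; apply/negbTE/neq_lift.
rewrite !mxE addr0 (inj_eq lift_inj) eqxx hl mul0r subr0 mul1r.
have n0 : (n ord0)%:R != 0 :> rat by rewrite pnatr_eq0 -lt0n.
by rewrite mulfK // eq_sym.
Qed.

Lemma generators_size_ge : (e' <= size rho)%N.
Proof.
have /eqP free := binomials_free.
by rewrite -[X in (X <= _)%N]free (leq_trans (mxrankS binomials_sub)) ?rank_leq_row.
Qed.

End LowerBound.

(** ** The relations joining the components of nabla_s, and their minimality *)

Section ComponentRelations.
Variables (e : nat) (n : 'I_e -> nat).
Hypothesis npos : forall i, 0 < n i.
Local Notation vec := {ffun 'I_e -> nat}.
Local Notation E s := (nabla_edge n s).

Definition comp_list (s : nat) := enum (comps n s).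

Definition comp_relations (s : nat) : seq (vec * vec) :=
  if comp_list s is r0 :: rs then [seq (vec_of r0, vec_of r) | r <- rs] else [::].

Definition betti_relations (bs : seq nat) : seq (vec * vec) :=
  flatten [seq comp_relations b | b <- bs].

Lemma comp_relationsP s p : p \in comp_relations s ->
  exists r0 rs r, [/\ comp_list s = r0 :: rs, r \in rs & p = (vec_of r0, vec_of r)].
Proof.
by rewrite /comp_relations; case: (comp_list s) => [|r0 rs] //= /mapP[r hr ->]; exists r0, rs, r.
Qed.

Lemma comp_list_cons s r0 rs r : comp_list s = r0 :: rs -> r \in rs ->
  [/\ r0 \in comps n s, r \in comps n s & ~~ connect (E s) r0 r].
Proof.
move=> hl hr; have := enum_uniq (comps n s); rewrite -/(comp_list s) hl /= => /andP[r0rs _].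
have c0 : r0 \in comps n s by rewrite -mem_enum -/(comp_list s) hl mem_head.
have c1 : r \in comps n s by rewrite -mem_enum -/(comp_list s) hl inE hr orbT.
by split => //; apply/negP => /(comps_eq c0 c1) r0r; rewrite r0r hr in r0rs.
Qed.

Lemma comp_relations_phi s p : p \in comp_relations s -> phi n p.1 = s /\ phi n p.2 = s.
Proof.
move=> /comp_relationsP[r0 [rs [r [hl hr ->]]]]; have [c0 c1 _] := comp_list_cons hl hr.
by rewrite !phi_vec_of //; [case: (mem_comps c1) | case: (mem_comps c0)].
Qed.

Lemma size_betti_relations bs : size (betti_relations bs) = \sum_(b <- bs) (nc n b).-1.
Proof.
rewrite size_flatten sumnE big_map /shape big_map; apply: eq_bigr => b _.
rewrite -card_comps cardE /comp_relations -/(comp_list b).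
by case: (comp_list b) => [|r0 rs] //=; rewrite size_map.
Qed.

Lemma uniq_betti_relations bs : uniq bs -> uniq (betti_relations bs).
Proof.
elim: bs => [|b bs IH] //= /andP[bbs ubs]; rewrite cat_uniq IH // andbT; apply/andP; split.
  have := enum_uniq (comps n b); rewrite /comp_relations -/(comp_list b).
  case: (comp_list b) => [|r0 rs] //= /andP[_ urs].
  by rewrite map_inj_uniq // => r r' [] /vec_of_inj.
apply/hasPn => p /flatten_mapP[b' hb' hp]; apply/negP => hp'.
have [e1 _] := comp_relations_phi hp'; have [e2 _] := comp_relations_phi hp.
by move: bbs; rewrite -e1 e2 hb'.
Qed.

(** If no generator of sigma of degree s crosses the boundary of the component
    of x in nabla_s, then neither does the congruence generated by sigma: the
    translates of a relation by a nonzero vector stay inside one component. *)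
Lemma cong_component (sigma : vec * vec -> Prop) s (x : {ffun 'I_e -> 'I_s.+1}) :
  (forall u v, sigma (u, v) -> phi n u = phi n v) ->
  (forall u v, sigma (u, v) -> phi n u = s ->
     connect (E s) (embed s u) x = connect (E s) (embed s v) x) ->
  forall u v, cong_gen sigma u v -> phi n u = s ->
    connect (E s) (embed s u) x = connect (E s) (embed s v) x.
Proof.
move=> sig_phi sig_comp u v.
elim=> {u v} [u v /sig_comp //|//|u v c IH|u v w c1 IH1 c2 IH2|u v c cuv IH] hu.
- by rewrite IH // (cong_gen_phi sig_phi c).
- by rewrite IH1 // IH2 // -(cong_gen_phi sig_phi c1).
- have hv : phi n (vadd v c) = s by rewrite phi_vadd -(cong_gen_phi sig_phi cuv) -phi_vadd.
  have [c0|cpos] := posnP (phi n c).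
    by move: hu; rewrite (phi_eq0 npos c0) !vadd0; apply: IH.
  have [i ci] := phi_support cpos.
  suff /(same_connect (@nabla_connect_sym _ n s)) -> :
    connect (E s) (embed s (vadd u c)) (embed s (vadd v c)) by [].
  apply: (share_connect (i := i)); rewrite ?embed_Zf //.
    by rewrite (coord_vadd i (vec_ofK npos hu)) (leq_trans ci) ?leq_addl.
  by rewrite (coord_vadd i (vec_ofK npos hv)) (leq_trans ci) ?leq_addl.
Qed.

(** No relation of [betti_relations bs] can be omitted from a presentation:
    without (r0, r) the congruence never leaves the component of r. *)
Lemma betti_relations_minimal bs (sigma : vec * vec -> Prop) :
  (forall p, sigma p -> p \in betti_relations bs) -> presentation n sigma ->
  forall p, p \in betti_relations bs -> sigma p.
Proof.
move=> sub pres p /flatten_mapP[b _ /comp_relationsP[r0 [rs [rq [hl hrq ->]]]]].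
have [c0 cq nconn] := comp_list_cons hl hrq; apply: NNPP => missing.
have sig_phi u v : sigma (u, v) -> phi n u = phi n v.
  by move/sub/flatten_mapP => [b' _ /comp_relations_phi[-> ->]].
have cross u v : sigma (u, v) -> phi n u = b ->
    connect (E b) (embed b u) rq = connect (E b) (embed b v) rq.
  move=> /[dup] suv /sub /flatten_mapP[b' _ hp] hu.
  have [hb' _] := comp_relations_phi hp; rewrite /= hu in hb'; subst b'.
  have [h0 [hs [r [hl' hr /pair_equal_spec[eu ev]]]]] := comp_relationsP hp.
  rewrite hl in hl'; case: hl' => e0 es; subst h0 hs u v.
  have [_ cr _] := comp_list_cons hl hr; rewrite !embedK (negbTE nconn); apply/esym/negP.
  by move=> /(comps_eq cr cq) rrq; apply: missing; rewrite -rrq.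
have p0 := phi_vec_of (mem_comps c0).2; have pq := phi_vec_of (mem_comps cq).2.
have := cong_component sig_phi cross ((pres _ _).2 (etrans p0 (esym pq))) p0.
by rewrite !embedK connect0 (negbTE nconn).
Qed.

End ComponentRelations.

Section Semigroup.
Variables (e' : nat) (n : 'I_e'.+1 -> nat) (S : nat -> Prop).
Local Notation e := e'.+1.
Local Notation vec := {ffun 'I_e -> nat}.
Local Notation E s := (nabla_edge n s).
Hypotheses (S0 : S 0) (Sadd : forall a b, S a -> S b -> S (a + b)).
Hypothesis gen_min : forall i, minimal_generator S (n i).
Hypothesis gen_all : forall x, minimal_generator S x -> exists i, n i = x.

Lemma gen_pos i : 0 < n i.
Proof. by case: (gen_min i). Qed.

Lemma phi_in_S (a : vec) : S (phi n a).
Proof.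
apply: (big_ind S) => // i _; elim: (a i) => [|k IH]; first by rewrite mul0n.
by rewrite mulSn; apply: Sadd => //; case: (gen_min i).
Qed.

Lemma factorization_exists s : S s -> exists a : vec, phi n a = s.
Proof.
elim/ltn_ind: s => s IH Ss; have [->|s_pos] := posnP s.
  by exists (vzero _); rewrite phi_vzero.
case: (classic (exists u v, [/\ S u, S v, 0 < u, 0 < v & s = u + v])) => [|irred].
  move=> [u [v [Su Sv u0 v0 suv]]].
  have [a ha] : exists a : vec, phi n a = u by apply: IH; rewrite // suv -{1}[u]addn0 ltn_add2l.
  have [b hb] : exists b : vec, phi n b = v by apply: IH; rewrite // suv -{1}[v]add0n ltn_add2r.
  by exists (vadd a b); rewrite phi_vadd ha hb.
have [i <-] := gen_all (And3 Ss s_pos irred).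
by exists (kunit 1 i); rewrite phi_kunit mul1n.
Qed.

Lemma betti_pos b : betti S n b -> 0 < b.
Proof. by case: b => [[_ /leq_trans/(_ (nc_zero gen_pos))]|]. Qed.

Section Presentation.
Variable bs : seq nat.
Hypothesis betti_in_bs : forall b, betti S n b -> b \in bs.
Local Notation rho := (fun p => p \in betti_relations n bs).

Section Degree.
Variable s : nat.
Hypothesis below : forall s', s' < s ->
  forall a b : vec, phi n a = s' -> phi n b = s' -> cong_gen rho a b.

(** Adjacent factorizations share a generator n_i; removing it leaves a
    relation of degree s - n_i. *)
Lemma edge_cong x y : E s x y -> cong_gen rho (vec_of x) (vec_of y).
Proof.
move=> /and4P[zx zy _ /existsP[i /andP[xi yi]]].
pose drop (z : {ffun 'I_e -> 'I_s.+1}) : vec := [ffun j => vec_of z j - (j == i)].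
have dropK (z : {ffun 'I_e -> 'I_s.+1}) : 0 < z i -> vadd (drop z) (kunit 1 i) = vec_of z.
  move=> zi; apply/ffunP => j; rewrite !ffunE.
  by case: eqP => [->|] /=; [rewrite subnK | rewrite subn0 addn0].
have phi_drop (z : {ffun 'I_e -> 'I_s.+1}) : z \in Zf n s -> 0 < z i -> phi n (drop z) + n i = s.
  by move=> zz zi; rewrite -(phi_vec_of zz) -(dropK z zi) phi_vadd phi_kunit mul1n.
rewrite -(dropK x xi) -(dropK y yi); apply: cg_add.
apply: (below (s' := phi n (drop x))) => //.
  by rewrite -(phi_drop x zx xi) -{1}[phi n (drop x)]addn0 ltn_add2l gen_pos.
by apply/eqP; rewrite -(eqn_add2r (n i)) phi_drop ?phi_drop.
Qed.

Lemma connect_cong x y : connect (E s) x y -> cong_gen rho (vec_of x) (vec_of y).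
Proof.
move=> /connectP[p]; elim: p x => [|z p IH] x /=; first by move=> _ ->; apply: cg_refl.
by move=> /andP[xz zp] hy; apply: cg_trans (edge_cong xz) (IH _ zp hy).
Qed.

(** The representatives of the components of nabla_s are related: through the
    pairs of [comp_relations s] if s is a Betti element, and trivially
    otherwise, since nabla_s then has a single component. *)
Lemma comps_cong r r' : r \in comps n s -> r' \in comps n s ->
  cong_gen rho (vec_of r) (vec_of r').
Proof.
move=> hr hr'; case: (classic (betti S n s)) => [s_betti|not_betti]; last first.
  have : #|comps n s| <= 1.
    rewrite card_comps leqNgt; apply/negP => nc_gt1; apply: not_betti; split => //.
    by rewrite -(phi_vec_of (mem_comps hr).2); apply: phi_in_S.
  by move/card_le1P/(_ r hr r'); rewrite hr' => /esym/eqP ->; apply: cg_refl.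
have sbs : s \in bs by apply: betti_in_bs.
have [r0 [rs hl]] : exists r0 rs, comp_list n s = r0 :: rs.
  move: hr; rewrite -mem_enum -/(comp_list n s).
  by case: (comp_list n s) => [|r0 rs] //; exists r0, rs.
have to_head r1 : r1 \in comps n s -> cong_gen rho (vec_of r0) (vec_of r1).
  rewrite -mem_enum -/(comp_list n s) hl inE => /orP[/eqP ->|r1rs]; first exact: cg_refl.
  by apply: cg_base; apply/flatten_mapP; exists s; rewrite // /comp_relations hl map_f.
exact: cg_trans (cg_sym (to_head r hr)) (to_head r' hr').
Qed.

(** Each factorization is related to the root of its component. *)
Lemma degree_cong a b : phi n a = s -> phi n b = s -> cong_gen rho a b.
Proof.
move=> ha hb; rewrite -(vec_ofK gen_pos ha) -(vec_ofK gen_pos hb).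
have root_cong z : cong_gen rho (vec_of z) (vec_of (fingraph.root (E s) z)).
  exact/connect_cong/connect_root.
apply: cg_trans (root_cong _) (cg_trans _ (cg_sym (root_cong _))).
exact: comps_cong (root_comps (embed_Zf gen_pos ha)) (root_comps (embed_Zf gen_pos hb)).
Qed.

End Degree.

Lemma betti_relations_presentation : presentation n rho.
Proof.
move=> a b; split.
  apply: cong_gen_phi => u v /flatten_mapP[b' _ /comp_relations_phi[]].
  by move=> /= -> ->.
suff gen s : forall u v : vec, phi n u = s -> phi n v = s -> cong_gen rho u v.
  by move=> hab; apply: (gen _ a b erefl (esym hab)).
by elim/ltn_ind: s => s IH u v hu hv; apply: degree_cong IH u v hu hv.
Qed.

End Presentation.

(** *** Betti-sorted semigroups: counting components *)

Section Sorted.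
Hypothesis sorted : betti_sorted S n.

Definition lifted b (x : {ffun 'I_e -> 'I_b.+1}) : Prop :=
  exists b', [/\ betti S n b', b' < b &
    exists y c, phi n y = b' /\ vec_of x = vadd y c].

(** Lifts of factorizations of comparable Betti elements b1 <=_S b2 < b are
    connected in nabla_b, through the factorization y1 + w + c2 of b, where w
    factorizes b2 - b1. *)
Lemma lifted_connect_ordered b b1 b2 (x1 x2 : {ffun 'I_e -> 'I_b.+1}) y1 c1 y2 c2 :
  betti S n b1 -> leS S b1 b2 -> b2 < b ->
  phi n y1 = b1 -> phi n y2 = b2 -> vec_of x1 = vadd y1 c1 -> vec_of x2 = vadd y2 c2 ->
  x1 \in Zf n b -> x2 \in Zf n b -> connect (E b) x1 x2.
Proof.
move=> hb1 [le12 S12] lt2 hy1 hy2 hx1 hx2 z1 z2.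
have [w hw] := factorization_exists S12.
have hc2 : phi n c2 = b - b2.
  by rewrite -(phi_vec_of z2) hx2 phi_vadd hy2 addKn.
set z := vadd (vadd y1 w) c2.
have hz : phi n z = b by rewrite !phi_vadd hy1 hw hc2 subnKC // subnKC // ltnW.
have zE k : (embed b z k : nat) = y1 k + w k + c2 k.
  by rewrite (coord_vadd k (vec_ofK gen_pos hz)) ffunE.
have [i y1i] : exists i, 0 < y1 i by apply: (phi_support (n := n)); rewrite hy1 betti_pos.
have [j c2j] : exists j, 0 < c2 j by apply: (phi_support (n := n)); rewrite hc2 subn_gt0.
have zb := embed_Zf gen_pos hz.
apply: (@connect_trans _ _ (embed b z)).
  apply: (share_connect (i := i)); rewrite // ?(coord_vadd i hx1) ?zE.
    exact: leq_trans y1i (leq_addr _ _).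
  by rewrite -addnA (leq_trans y1i) ?leq_addr.
apply: (share_connect (i := j)); rewrite // ?(coord_vadd j hx2) ?zE.
  exact: leq_trans c2j (leq_addl _ _).
exact: leq_trans c2j (leq_addl _ _).
Qed.

(** By sortedness, all lifted factorizations of b lie in one component. *)
Lemma lifted_connect b (x1 x2 : {ffun 'I_e -> 'I_b.+1}) :
  x1 \in Zf n b -> x2 \in Zf n b -> lifted x1 -> lifted x2 -> connect (E b) x1 x2.
Proof.
move=> z1 z2 [b1 [hb1 lt1 [y1 [c1 [hy1 hx1]]]]] [b2 [hb2 lt2 [y2 [c2 [hy2 hx2]]]]].
have [le12|le21] := sorted hb1 hb2.
  exact: lifted_connect_ordered hb1 le12 lt2 hy1 hy2 hx1 hx2 z1 z2.
by rewrite nabla_connect_sym; apply: lifted_connect_ordered hb2 le21 lt1 hy2 hy1 hx2 hx1 z2 z1.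
Qed.

Definition main_comp b (r : {ffun 'I_e -> 'I_b.+1}) : Prop :=
  exists x, [/\ x \in Zf n b, lifted x & fingraph.root (E b) x = r].

Lemma main_comp_uniq b (r1 r2 : {ffun 'I_e -> 'I_b.+1}) :
  main_comp r1 -> main_comp r2 -> r1 = r2.
Proof.
move=> [x1 [z1 l1 <-]] [x2 [z2 l2 <-]].
exact/(fingraph.rootP (@nabla_connect_sym _ n b))/lifted_connect.
Qed.

(** Classical decision of a proposition, to define sets by the property
    [main_comp], which quantifies over all Betti elements. *)
Definition classicb (P : Prop) : bool :=
  if excluded_middle_informative P then true else false.

Lemma classicbP (P : Prop) : reflect P (classicb P).
Proof. by rewrite /classicb; case: excluded_middle_informative => h; constructor. Qed.

Definition minor_comps b : {set {ffun 'I_e -> 'I_b.+1}} :=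
  [set r in comps n b | ~~ classicb (main_comp r)].

Definition witness b (r : {ffun 'I_e -> 'I_b.+1}) : 'I_e := odflt ord0 [pick i | 0 < r i].

Definition witnesses b : {set 'I_e} := (@witness b) @: minor_comps b.

Lemma witness_support b (r : {ffun 'I_e -> 'I_b.+1}) :
  r \in Zf n b -> 0 < b -> 0 < r (witness r).
Proof.
move=> zr b_pos; have [i ri] : exists i, 0 < vec_of r i.
  by apply: (phi_support (n := n)); rewrite phi_vec_of.
rewrite /witness; case: pickP => [//|none]; by have := none i; rewrite -vec_ofE ri.
Qed.

(** Different components have disjoint supports, so the witnesses differ. *)
Lemma witness_inj b : 0 < b -> {in comps n b &, injective (@witness b)}.
Proof.
move=> b_pos r1 r2 h1 h2 same.
have z1 := (mem_comps h1).2; have z2 := (mem_comps h2).2.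
apply: comps_eq h1 h2 _.
apply: (share_connect (i := witness r1)); rewrite ?witness_support //.
by rewrite same witness_support.
Qed.

Lemma card_witnesses b : 0 < b -> #|witnesses b| = #|minor_comps b|.
Proof.
move=> b_pos; apply: card_in_imset => r1 r2 /setIdP[h1 _] /setIdP[h2 _].
exact: (witness_inj b_pos h1 h2).
Qed.

Lemma nc_le_witnesses b : 0 < b ->
  (forall r : {ffun 'I_e -> 'I_b.+1}, ~ main_comp r) -> nc n b <= #|witnesses b|.
Proof.
move=> b_pos none; rewrite card_witnesses // -card_comps.
apply/subset_leq_card/subsetP => r hr.
by rewrite inE hr; apply/negP => /classicbP; apply: none.
Qed.

Lemma nc_le_witnesses_succ b : 0 < b -> nc n b <= #|witnesses b| + 1.
Proof.
move=> b_pos; case: (classic (exists r, @main_comp b r)) => [[r hr]|none]; last first.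
  by rewrite (leq_trans (nc_le_witnesses b_pos _)) ?leq_addr // => r hr; apply: none; exists r.
rewrite card_witnesses // -card_comps (cardsD1 r) addnC leq_add ?leq_b1 //.
apply/subset_leq_card/subsetP => r'; rewrite in_setD1 => /andP[r'r hr'].
rewrite inE hr'; apply/negP => /classicbP hm.
by rewrite (main_comp_uniq hm hr) eqxx in r'r.
Qed.

(** If b1 <_S b2 are Betti elements, a minor component of nabla_b2 cannot share
    an index with a component of nabla_b1: lifting the latter by a
    factorization of b2 - b1 would make it main. *)
Lemma witnesses_disjoint_ordered b1 b2 i : betti S n b1 -> betti S n b2 ->
  leS S b1 b2 -> b1 <> b2 -> i \in witnesses b1 -> i \in witnesses b2 -> False.
Proof.
move=> hb1 hb2 [le12 S12] ne /imsetP[r1 hr1 ->] /imsetP[r2 hr2 same].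
move: hr1 hr2 => /setIdP[/mem_comps[_ z1] _] /setIdP[/mem_comps[rr2 z2] /negP minor].
have [w hw] := factorization_exists S12.
have ha : phi n (vadd (vec_of r1) w) = b2 by rewrite phi_vadd (phi_vec_of z1) hw subnKC.
have lift_r1 := vec_ofK gen_pos ha; have z := embed_Zf gen_pos ha.
apply/minor/classicbP; exists (embed b2 (vadd (vec_of r1) w)); split => //.
  exists b1; split => //; first by rewrite ltn_neqAle le12 andbT; apply/eqP.
  by exists (vec_of r1), w; split; [apply: phi_vec_of | apply: lift_r1].
rewrite -rr2; apply/(fingraph.rootP (@nabla_connect_sym _ n b2)).
have r1w := witness_support z1 (betti_pos hb1).
apply: (share_connect (i := witness r1)) => //.
  by rewrite (coord_vadd _ lift_r1) vec_ofE (leq_trans r1w) ?leq_addr.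
by rewrite same (witness_support z2 (betti_pos hb2)).
Qed.

Lemma witnesses_disjoint b1 b2 : betti S n b1 -> betti S n b2 -> b1 <> b2 ->
  [disjoint witnesses b1 & witnesses b2].
Proof.
move=> h1 h2 ne; apply/pred0P => i /=; apply/negP => /andP[w1 w2].
have [le12|le21] := sorted h1 h2; first exact: witnesses_disjoint_ordered le12 ne w1 w2.
by apply: witnesses_disjoint_ordered le21 _ w2 w1 => // /esym.
Qed.

(** The witness sets of distinct Betti elements are disjoint subsets of 'I_e,
    so their sizes add up to at most e (here counted together with a set X
    disjoint from all of them, to allow induction on the list). *)
Lemma sum_witnesses_le (l : seq nat) (X : {set 'I_e}) : uniq l ->
  (forall b, b \in l -> betti S n b /\ [disjoint X & witnesses b]) ->
  \sum_(b <- l) #|witnesses b| + #|X| <= e.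
Proof.
elim: l X => [|b l IH] X /=; first by rewrite big_nil -[X in _ <= X]card_ord max_card.
move=> /andP[bl ul] hl; have [hb dXb] := hl b (mem_head b l).
have cardU : #|X :|: witnesses b| = #|X| + #|witnesses b|.
  by apply/eqP; rewrite (leq_card_setU _ _).2.
rewrite big_cons addnC addnA -cardU addnC; apply: IH ul _ => b' hb'.
have [hb2 dXb'] : betti S n b' /\ [disjoint X & witnesses b'] by apply: hl; rewrite inE hb' orbT.
split => //.
rewrite -setI_eq0 setIUl setU_eq0 !setI_eq0 dXb' witnesses_disjoint //.
by move=> bb'; rewrite bb' hb' in bl.
Qed.

Lemma sum_witnesses_betti (l : seq nat) : uniq l ->
  (forall b, b \in l -> betti S n b) -> \sum_(b <- l) #|witnesses b| <= e.
Proof.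
move=> ul hl; have := sum_witnesses_le (X := set0) ul.
rewrite cards0 addn0; apply=> b hb.
by split; [exact: hl | rewrite -setI_eq0 set0I].
Qed.

(** In particular there are at most e Betti elements, hence finitely many. *)
Lemma betti_finite : exists l, uniq l /\ forall b, b \in l <-> betti S n b.
Proof.
apply: NNPP => infinite.
suff /(_ e.+1)[l [ul hl sl]] :
    forall k, exists l, [/\ uniq l, forall b, b \in l -> betti S n b & size l = k].
  have le_e := sum_witnesses_betti ul hl.
  have : size l <= \sum_(b <- l) #|witnesses b|.
    rewrite -sum1_size big_seq [X in _ <= X]big_seq leq_sum // => b hb.
    rewrite -(leq_add2r 1); have hb' := hl b hb.
    exact: leq_trans (proj2 hb') (nc_le_witnesses_succ (betti_pos hb')).
  by rewrite sl => /leq_trans/(_ le_e); rewrite ltnn.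
elim=> [|k [l [ul hl sl]]]; first by exists [::].
have [b [hb bl]] : exists b, betti S n b /\ b \notin l.
  apply: NNPP => all_in; apply: infinite; exists l; split => // b; split; first exact: hl.
  by move=> hb; apply/negPn/negP => bl; apply: all_in; exists b.
exists (b :: l); split; rewrite /= ?bl ?sl // => b'.
by rewrite inE => /orP[/eqP ->|/hl].
Qed.

(** The least Betti element has no main component, so its witnesses account
    for all its components; hence sum_b (nc(nabla_b) - 1) <= e - 1. *)
Lemma sum_nc_le (l : seq nat) : uniq l -> (forall b, b \in l <-> betti S n b) ->
  \sum_(b <- l) (nc n b).-1 <= e'.
Proof.
move=> ul hl; have betti_l b : b \in l -> betti S n b by move/hl.
case: l ul hl betti_l => [|x l] ul hl betti_l; first by rewrite big_nil.
case: (ex_minnP (ex_intro (fun b => b \in x :: l) x (mem_head x l))) => bm bml bm_min.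
have [bm_betti bm_pos] := (betti_l _ bml, betti_pos (betti_l _ bml)).
have no_main (r : {ffun 'I_e -> 'I_bm.+1}) : ~ main_comp r.
  move=> [y [_ [b' [hb' lt' _]] _]].
  by have := bm_min b' (proj2 (hl b') hb'); rewrite leqNgt lt'.
rewrite -ltnS (leq_trans _ (sum_witnesses_betti ul betti_l)) //.
rewrite (bigD1_seq bm) // [X in _ < X](bigD1_seq bm) //= -addSn leq_add //.
  by rewrite prednK ?nc_le_witnesses // ltnW // (proj2 bm_betti).
rewrite big_seq_cond [X in _ <= X]big_seq_cond leq_sum // => b /andP[hb _].
by rewrite -subn1 leq_subLR addnC nc_le_witnesses_succ // (betti_pos (betti_l b hb)).
Qed.

(** The relations of the Betti elements form a minimal presentation, whose
    size is squeezed between the two bounds. *)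
Lemma sorted_complete_intersection : complete_intersection n.
Proof.
have [bs [ubs hbs]] := betti_finite.
have pres : presentation n (fun p => p \in betti_relations n bs).
  by apply: betti_relations_presentation => b /hbs.
exists (betti_relations n bs); split.
- exact: uniq_betti_relations.
- by split=> // sigma; apply: (betti_relations_minimal gen_pos).
- apply/eqP; rewrite subn1 /= eqn_leq size_betti_relations sum_nc_le //=.
  rewrite -size_betti_relations.
  by apply: (generators_size_ge (gen_pos ord0)) => a b /pres.
Qed.

End Sorted.
End Semigroup.

Lemma minimal_generator_exists (S : nat -> Prop) s :
  S s -> 0 < s -> exists x, minimal_generator S x.
Proof.
elim/ltn_ind: s => s IH Ss s_pos.
case: (classic (exists u v, [/\ S u, S v, 0 < u, 0 < v & s = u + v])) => [|irred].
  move=> [u [v [Su _ u_pos v_pos suv]]].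
  by apply: (IH u) => //; rewrite suv -{1}[u]addn0 ltn_add2l.
by exists s; split.
Qed.

Theorem corollary6p3 (S : nat -> Prop) (e : nat) (n : 'I_e -> nat) :
  numerical_semigroup S ->
  minimal_generating_system S n ->
  betti_sorted S n ->
  complete_intersection n.
Proof.
move=> [S0 Sadd [N cofinite]] [_ gens] sorted.
case: e n gens sorted => [|e'] n gens sorted.
  have [x /(gens x).1[[i i_lt0] _]] :=
    minimal_generator_exists (cofinite N.+1 (leqnSn N)) (ltn0Sn N).
  by rewrite ltn0 in i_lt0.
apply: (sorted_complete_intersection S0 Sadd _ _ sorted) => [i|x /(gens x).1 //].
by apply/(gens (n i)).2; exists i.
Qed.
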